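(* Let $G=\mathbb{Z}\oplus\mathbb{Z}$, written as integer column vectors, and for $(i,j)\neq(0,0)$ let $[i/j]$ denote the unique maximal cyclic subgroup of $G$ containing $\binom{i}{j}$. Let $\nu,\mu$ be integers with $\gcd(\nu,\mu)=1$, $\mu>0$ and $0\le\nu<\mu$. Then the only automorphisms of $G$ that preserve each of $[\nu/\mu]$ and $[1/0]$ are among $$\phi_1=\pm\begin{pmatrix}1&0\\0&1\end{pmatrix},\quad \phi_2=\pm\begin{pmatrix}-1&1\\0&1\end{pmatrix},\quad \phi_3=\pm\begin{pmatrix}-1&0\\0&1\end{pmatrix}.$$ Only $\phi_1$ works for all $[\nu/\mu]$, $\phi_2$ works only for $[1/2]$, and $\phi_3$ works only for $[0/1]$.
   Context: Automorphisms of $\mathbb{Z}\oplus\mathbb{Z}$ are identified with $2\times 2$ integer matrices of determinant $\pm1$ acting on column vectors on the left. An automorphism preserves a subgroup if it maps it onto itself. *)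

(* G = Z (+) Z as integer column vectors 'cV[int]_2,
   automorphisms as 2x2 integer matrices of determinant +-1 acting on the left. *)
From mathcomp Require Import all_boot all_order all_algebra.
Set Implicit Arguments. Unset Strict Implicit. Unset Printing Implicit Defensive.
Import Order.TTheory GRing.Theory Num.Theory.
Local Open Scope ring_scope.

Definition vec2 (a b : int) : 'cV[int]_2 :=
  \col_(i < 2) (if (i : nat) == 0%N then a else b).

Definition mx2 (a b c d : int) : 'M[int]_2 :=
  \matrix_(i < 2, j < 2)
    (if (i : nat) == 0%N then (if (j : nat) == 0%N then a else b)
     else (if (j : nat) == 0%N then c else d)).

Definition subgrp := 'cV[int]_2 -> Prop.

Definition cyc (u : 'cV[int]_2) : subgrp := fun w => exists k : int, w = k *: u.

Definition is_cyclic (H : subgrp) : Prop :=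
  exists u, forall w, H w <-> cyc u w.

(* H is a maximal cyclic subgroup of G containing v; for v <> 0 such an H
   exists and is unique, and is denoted [i/j] for v = (i; j) in the paper *)
Definition max_cyclic_containing (v : 'cV[int]_2) (H : subgrp) : Prop :=
  [/\ is_cyclic H, H v &
      forall K : subgrp, is_cyclic K -> (forall w, H w -> K w) ->
        forall w, K w -> H w].

Definition is_aut (A : 'M[int]_2) : Prop := \det A = 1 \/ \det A = -1.

Definition preserves (A : 'M[int]_2) (H : subgrp) : Prop :=
  (forall w, H w -> H (A *m w)) /\
  (forall w, H w -> exists w', H w' /\ A *m w' = w).

Definition phi1 : 'M[int]_2 := mx2 1 0 0 1.
Definition phi2 : 'M[int]_2 := mx2 (-1) 1 0 1.
Definition phi3 : 'M[int]_2 := mx2 (-1) 0 0 1.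

(* An automorphism preserving the lines through the primitive vectors (1, 0)
   and (nu, mu) has both as eigenvectors with eigenvalues +-1, so up to a sign
   it is [[c, b], [0, 1]] with c = +-1 and c nu + b mu = nu.  For c = 1 this
   forces b = 0; for c = -1 it reads b mu = 2 nu, and 0 <= nu < mu together
   with coprimality leaves only b = 0, (nu, mu) = (0, 1) and b = 1,
   (nu, mu) = (1, 2). *)

From mathcomp Require Import all_boot all_order all_algebra.
From mathcomp Require Import zify ring.
Import Order.TTheory GRing.Theory Num.Theory.
Local Open Scope ring_scope.

Lemma vec2_inj (a b c d : int) : vec2 a b = vec2 c d -> a = c /\ b = d.
Proof.
move=> E; split.
- by have := congr1 (fun v : 'cV[int]_2 => v ord0 ord0) E; rewrite !mxE.
- by have := congr1 (fun v : 'cV[int]_2 => v ord_max ord0) E; rewrite !mxE.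
Qed.

Lemma vec2_eta (u : 'cV[int]_2) : u = vec2 (u ord0 ord0) (u ord_max ord0).
Proof.
apply/matrixP=> i j; rewrite !mxE (ord1 j).
by case: i => [[|[|//]] ?] /=; congr (u _ _); apply: val_inj.
Qed.

Lemma mx2_eta (A : 'M[int]_2) :
  A = mx2 (A ord0 ord0) (A ord0 ord_max) (A ord_max ord0) (A ord_max ord_max).
Proof.
apply/matrixP=> i j; rewrite !mxE.
by case: i => [[|[|//]] ?]; case: j => [[|[|//]] ?] /=; congr (A _ _); apply: val_inj.
Qed.

Lemma scale_vec2 (k a b : int) : k *: vec2 a b = vec2 (k * a) (k * b).
Proof. by apply/matrixP=> i j; rewrite !mxE; case: ifP. Qed.

Lemma scale_mx2 (k a b c d : int) :
  k *: mx2 a b c d = mx2 (k * a) (k * b) (k * c) (k * d).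
Proof. by apply/matrixP=> i j; rewrite !mxE; do 2 case: ifP. Qed.

Lemma mul_mx2_vec2 (a b c d x y : int) :
  mx2 a b c d *m vec2 x y = vec2 (a * x + b * y) (c * x + d * y).
Proof.
by apply/matrixP=> i j; rewrite !mxE big_ord_recr big_ord1 /= !mxE /=; case: ifP.
Qed.

Lemma vec2_neq0 (x y : int) : x != 0 \/ y != 0 -> vec2 x y != 0.
Proof.
move=> nz; apply/eqP=> /(congr1 (fun v : 'cV[int]_2 => (v ord0 ord0, v ord_max ord0))).
by rewrite !mxE => -[x0 y0]; case: nz => /eqP.
Qed.

Lemma mulz_eq1_sign (m k : int) : m * k = 1 -> k = 1 \/ k = -1.
Proof. by move/intUnitRing.unitzPl; rewrite qualifE /= => /orP[]/eqP; [left|right]. Qed.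

Lemma sign_mulss {s : int} : s = 1 \/ s = -1 -> s * s = 1.
Proof. by case=> ->. Qed.

Lemma sign_mul (s t : int) : s = 1 \/ s = -1 -> t = 1 \/ t = -1 ->
  s * t = 1 \/ s * t = -1.
Proof. by case=> -> [] ->; [left|right|right|left]. Qed.

Lemma cyclic_primitive {x y : int} {H : subgrp} :
  coprimez x y -> is_cyclic H -> H (vec2 x y) ->
  forall w, H w <-> cyc (vec2 x y) w.
Proof.
move=> /coprimezP[[p q] /= bezout] [u Hu] /Hu[k].
rewrite [u]vec2_eta scale_vec2 => /vec2_inj[ex ey].
have /mulz_eq1_sign/sign_mulss kk : (p * u ord0 ord0 + q * u ord_max ord0) * k = 1.
  by rewrite -bezout ex ey; ring.
have eu : u = k *: vec2 x y by rewrite [u]vec2_eta ex ey scale_vec2 !mulrA kk !mul1r.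
move=> w; rewrite Hu eu; split=> -[j ->]; exists (j * k); rewrite scalerA //.
by rewrite -mulrA kk mulr1.
Qed.

Lemma preserves_ext (A : 'M[int]_2) {H H' : subgrp} :
  (forall w, H w <-> H' w) -> preserves A H <-> preserves A H'.
Proof.
suff imp (G G' : subgrp) : (forall w, G w <-> G' w) -> preserves A G -> preserves A G'.
  by move=> E; split; apply: imp => // w; apply: iff_sym.
move=> E [into onto]; split=> w /E Gw; first by apply/E; apply: into.
by have [w' [/E G'w' <-]] := onto w Gw; exists w'.
Qed.

(* Preserving a line means having its generator as an eigenvector; the
   eigenvalue is a unit of Z because the image of the line is all of it. *)
Lemma preserves_cycP (A : 'M[int]_2) (v : 'cV[int]_2) : v != 0 ->
  preserves A (cyc v) <-> exists2 e, e = 1 \/ e = -1 & A *m v = e *: v.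
Proof.
move=> v_neq0; have v_cyc : cyc v v by exists 1; rewrite scale1r.
split=> [[into onto] | [e sign_e Av]].
- have [k Av] := into v v_cyc.
  have [_ [[m ->] Amv]] := onto v v_cyc.
  rewrite -scalemxAr Av scalerA in Amv.
  have /eqP : (m * k - 1) *: v = 0 by rewrite scalerBl Amv scale1r subrr.
  rewrite scalemx_eq0 (negPf v_neq0) orbF subr_eq0 => /eqP/mulz_eq1_sign.
  by exists k.
- have ee := sign_mulss sign_e.
  split=> w [j ->]; first by exists (j * e); rewrite -scalemxAr Av scalerA.
  exists ((j * e) *: v); split; first by exists (j * e).
  by rewrite -scalemxAr Av scalerA -mulrA ee mulr1.
Qed.

Lemma preserves_scale_sign (s : int) (A : 'M[int]_2) (v : 'cV[int]_2) :
  s = 1 \/ s = -1 -> v != 0 ->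
  preserves (s *: A) (cyc v) <-> preserves A (cyc v).
Proof.
move=> sign_s v_neq0; rewrite !preserves_cycP //; have ss := sign_mulss sign_s.
split=> -[e sign_e Av]; exists (s * e).
- exact: sign_mul.
- by rewrite -[LHS]scale1r -ss -scalerA scalemxAl Av scalerA.
- exact: sign_mul.
- by rewrite -scalemxAl Av scalerA.
Qed.

Lemma preserves_lines_normal_form {A : 'M[int]_2} {nu mu : int} : mu != 0 ->
  preserves A (cyc (vec2 nu mu)) -> preserves A (cyc (vec2 1 0)) ->
  exists s c b, [/\ s = 1 \/ s = -1, c = 1 \/ c = -1 & A = s *: mx2 c b 0 1].
Proof.
move=> mu_neq0 /preserves_cycP-[|e sign_e Av]; first by apply: vec2_neq0; right.
move=> /preserves_cycP-[|f sign_f Ae1]; first by apply: vec2_neq0; left.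
rewrite [A]mx2_eta in Av Ae1 *; move: Av Ae1.
move: (A ord0 ord0) (A ord0 ord_max) (A ord_max ord0) (A ord_max ord_max) => a b c d.
rewrite !mul_mx2_vec2 !scale_vec2 !mulr1 !mulr0 !addr0 => /vec2_inj[_ e_mu].
case/vec2_inj=> -> c0; rewrite c0 mul0r add0r in e_mu.
have -> : d = e by apply: (mulIf mu_neq0).
exists e, (e * f), (e * b); split=> //; first exact: sign_mul.
by rewrite scale_mx2 !mulrA (sign_mulss sign_e) !mul1r mulr0 mulr1 c0.
Qed.

Lemma preserves_upper_e1 (c b d : int) : c = 1 \/ c = -1 ->
  preserves (mx2 c b 0 d) (cyc (vec2 1 0)).
Proof.
move=> sign_c; apply/preserves_cycP; first by apply: vec2_neq0; left.
by exists c; rewrite // mul_mx2_vec2 scale_vec2 !mulr1 !mulr0 !addr0.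
Qed.

Lemma preserves_normal_cycP (c b nu mu : int) : mu != 0 ->
  preserves (mx2 c b 0 1) (cyc (vec2 nu mu)) <-> c * nu + b * mu = nu.
Proof.
move=> mu_neq0; rewrite preserves_cycP; last by apply: vec2_neq0; right.
rewrite mul_mx2_vec2 mul0r add0r mul1r; split=> [[e _ +] | eq_nu].
  rewrite scale_vec2 => /vec2_inj[-> e_mu].
  have /(mulIf mu_neq0) -> : e * mu = 1 * mu by rewrite mul1r -e_mu.
  exact: mul1r.
by exists 1; [left | rewrite eq_nu scale1r].
Qed.

Lemma preserves_normal_linesP {s c b nu mu : int} :
  s = 1 \/ s = -1 -> c = 1 \/ c = -1 -> mu != 0 ->
  preserves (s *: mx2 c b 0 1) (cyc (vec2 nu mu)) /\
  preserves (s *: mx2 c b 0 1) (cyc (vec2 1 0)) <-> c * nu + b * mu = nu.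
Proof.
move=> sign_s sign_c mu_neq0.
have e1_neq0 : vec2 1 0 != 0 by apply: vec2_neq0; left.
have v_neq0 : vec2 nu mu != 0 by apply: vec2_neq0; right.
rewrite !preserves_scale_sign // preserves_normal_cycP //.
by split=> [[]//|eq_nu]; split=> //; apply: preserves_upper_e1.
Qed.

Lemma coprimez_double_cases {nu mu b : int} :
  coprimez nu mu -> 0 <= nu -> nu < mu -> b * mu = 2 * nu ->
  (b = 0 /\ nu = 0 /\ mu = 1) \/ (b = 1 /\ nu = 1 /\ mu = 2).
Proof.
move=> /coprimezP[[p q] /= bezout] nu_ge0 nu_lt_mu b_mu.
have [b0|b1] : b = 0 \/ b = 1 by nia.
- left; have nu0 : nu = 0 by lia.
  have : q * mu = 1 by rewrite -[RHS]bezout nu0; ring.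
  by move/mulz_eq1_sign; lia.
- right; have mu2 : mu = 2 * nu by lia.
  have : (p + q * 2) * nu = 1 by rewrite -[RHS]bezout mu2; ring.
  by move/mulz_eq1_sign; lia.
Qed.

Lemma normal_form_is_phi {nu mu c b : int} :
  coprimez nu mu -> 0 <= nu -> nu < mu ->
  c = 1 \/ c = -1 -> c * nu + b * mu = nu ->
  mx2 c b 0 1 = phi1 \/ mx2 c b 0 1 = phi2 \/ mx2 c b 0 1 = phi3.
Proof.
move=> cop nu_ge0 nu_lt_mu [->|->] eq_nu.
- by left; have -> : b = 0 by nia.
- have b_mu : b * mu = 2 * nu by lia.
  by case: (coprimez_double_cases cop nu_ge0 nu_lt_mu b_mu) => -[-> _]; auto.
Qed.

Theorem mainTheorem3 (nu mu : int) (H K : subgrp) :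
  coprimez nu mu -> 0 < mu -> 0 <= nu -> nu < mu ->
  max_cyclic_containing (vec2 nu mu) H ->
  max_cyclic_containing (vec2 1 0) K ->
  (forall A : 'M[int]_2, is_aut A -> preserves A H -> preserves A K ->
     exists s : int, (s = 1 \/ s = -1) /\
       (A = s *: phi1 \/ A = s *: phi2 \/ A = s *: phi3)) /\
  (forall s : int, s = 1 \/ s = -1 ->
     (preserves (s *: phi1) H /\ preserves (s *: phi1) K) /\
     ((preserves (s *: phi2) H /\ preserves (s *: phi2) K) <->
        (nu = 1 /\ mu = 2)) /\
     ((preserves (s *: phi3) H /\ preserves (s *: phi3) K) <->
        (nu = 0 /\ mu = 1))).
Proof.
move=> cop mu_gt0 nu_ge0 nu_lt_mu [cH Hv _] [cK Ke _].
have mu_neq0 := lt0r_neq0 mu_gt0.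
have eH := cyclic_primitive cop cH Hv.
have eK := cyclic_primitive (isT : coprimez 1 0) cK Ke.
have linesE A : preserves A H /\ preserves A K <->
    preserves A (cyc (vec2 nu mu)) /\ preserves A (cyc (vec2 1 0)).
  by rewrite (preserves_ext _ eH) (preserves_ext _ eK).
split=> [A _ pH pK | s sign_s].
  have /linesE[pH' pK'] := conj pH pK.
  have [s [c [b [sign_s sign_c eA]]]] := preserves_lines_normal_form mu_neq0 pH' pK'.
  subst A; have /(preserves_normal_linesP sign_s sign_c mu_neq0) := conj pH' pK'.
  by move/(normal_form_is_phi cop nu_ge0 nu_lt_mu sign_c) => [|[|]] ->; exists s; auto.
rewrite !linesE !preserves_normal_linesP //; try by [left | right].
have double_cases b := @coprimez_double_cases nu mu b cop nu_ge0 nu_lt_mu.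
split; first by rewrite mul1r mul0r addr0.
split; split=> [eq_nu | [-> ->]]; [| lia | | lia].
- have /double_cases : 1 * mu = 2 * nu by lia.
  lia.
- have /double_cases : 0 * mu = 2 * nu by lia.
  lia.
Qed.
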